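(* In a hierarchical tensor factorization with mode tree $\mathcal T$, for any $\nu\in\mathrm{int}(\mathcal T)$ and $r\in[R_{Pa(\nu)}]$: $$\|\mathcal W^{(\nu,r)}\|\le\|W^{(\nu)}_{:,r}\|\cdot\prod_{\nu_c\in C(\nu)}\|\mathcal W^{(\nu_c,:)}\|.$$
   Context: Fix $N\in\mathbb N$, $D_1,\dots,D_N\in\mathbb N$; $[K]:=\{1,\dots,K\}$; norms are Frobenius norms; $\otimes$ the tensor product. A mode tree $\mathcal T$ over $[N]$ is a rooted tree whose nodes are labeled by subsets of $[N]$, with exactly $N$ leaves labeled $\{1\},\dots,\{N\}$, and where each interior node's label is the union of its children's labels; nodes are identified with labels, root $[N]$, $\mathrm{int}(\mathcal T)$ interior nodes, $Pa(\nu)$ parent, $C(\nu)$ children (fixed order). A hierarchical tensor factorization has $R_\nu\in\mathbb N$ ($\nu\in\mathrm{int}(\mathcal T)$), $R_{Pa([N])}:=1$, $R_{\{n\}}:=D_n$, weight matrices $W^{(\nu)}\in\mathbb R^{R_\nu\times R_{Pa(\nu)}}$. Intermediate tensors: $\mathcal W^{(\{n\},r)}:=W^{(\{n\})}_{:,r}$; for $\nu\in\mathrm{int}(\mathcal T)\setminus\{[N]\}$ (leaves to root), $r\in[R_{Pa(\nu)}]$: $\mathcal W^{(\nu,r)}:=\pi_\nu\big(\sum_{r'=1}^{R_\nu}W^{(\nu)}_{r',r}\bigotimes_{\nu_c\in C(\nu)}\mathcal W^{(\nu_c,r')}\big)$; end tensor $\mathcal W_H:=\pi_{[N]}\big(\sum_{r'=1}^{R_{[N]}}W^{([N])}_{r',1}\bigotimes_{\nu_c\in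 C([N])}\mathcal W^{(\nu_c,r')}\big)$, where $\pi_\nu$ permutes modes (ordered by children, each child's elements ascending) into ascending order of the elements of $\nu$; by convention $\mathcal W^{([N],1)}:=\mathcal W_H$. For $\nu\in\mathcal T$, $\mathcal W^{(\nu,:)}$ is the tensor obtained by stacking $(\mathcal W^{(\nu,r)})_{r=1}^{R_{Pa(\nu)}}$ along an additional last mode, i.e. $\mathcal W^{(\nu,:)}_{:,\dots,:,r}=\mathcal W^{(\nu,r)}$. *)

From HB Require Import structures.
From mathcomp Require Import all_boot all_order all_algebra.
From Stdlib Require List.
Set Implicit Arguments. Unset Strict Implicit. Unset Printing Implicit Defensive.
Import Order.TTheory GRing.Theory Num.Theory.
Local Open Scope ring_scope.

Inductive mtree (N : nat) : Type :=
| MLeaf of 'I_N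
| MNode of seq (mtree N).
Arguments MLeaf {N}.
Arguments MNode {N}.

Fixpoint label N (t : mtree N) : {set 'I_N} :=
  match t with
  | MLeaf n => [set n]
  | MNode cs => (fix U (cs : seq (mtree N)) : {set 'I_N} :=
                   match cs with
                   | [::] => set0
                   | c :: cs' => label c :|: U cs'
                   end) cs
  end.

Fixpoint leaves N (t : mtree N) : seq 'I_N :=
  match t with
  | MLeaf n => [:: n]
  | MNode cs => (fix L (cs : seq (mtree N)) : seq 'I_N :=
                   match cs with
                   | [::] => [::]
                   | c :: cs' => leaves c ++ L cs'
                   end) cs
  end.

Fixpoint subtrees N (t : mtree N) : seq (mtree N) :=
  t :: match t with
       | MLeaf _ => [::]
       | MNode cs => (fix S (cs : seq (mtree N)) : seq (mtree N) :=
                        match cs with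
                        | [::] => [::]
                        | c :: cs' => subtrees c ++ S cs'
                        end) cs
       end.

Definition children N (t : mtree N) : seq (mtree N) :=
  if t is MNode cs then cs else [::].

Definition is_interior N (t : mtree N) : bool :=
  if t is MNode _ then true else false.

(* t is a mode tree over [N]: its leaves are exactly {1},...,{N} (each once),
   interior nodes have at least one child, and distinct nodes have distinct
   labels (nodes are identified with their labels). *)
Definition mode_tree N (t : mtree N) : bool :=
  [&& perm_eq (leaves t) (enum 'I_N),
      all (fun s => if s is MNode cs then (0 < size cs)%N else true) (subtrees t)
    & uniq (map (@label N) (subtrees t))].

(* every node of t paired with the rank R_{Pa(node)} of its parent:
   R_{Pa(root)} = pr (= 1 at the top level), and for a child of an interior
   node nu, R_{Pa(child)} = R_nu = Rk (label nu). *)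
Fixpoint nodes_pr N (Rk : {set 'I_N} -> nat) (t : mtree N) (pr : nat)
  : seq (mtree N * nat) :=
  (t, pr) :: match t with
             | MLeaf _ => [::]
             | MNode cs => (fix S (cs : seq (mtree N)) : seq (mtree N * nat) :=
                              match cs with
                              | [::] => [::]
                              | c :: cs' => nodes_pr Rk c (Rk (label t)) ++ S cs'
                              end) cs
             end.

(* A tensor over nu ⊆ [N] is a real function on the
   multi-indices of shape nu (Some exactly on nu); its modes are thus
   labelled by the elements of nu (i.e. ordered ascendingly). *)
Definition midx N (D : 'I_N -> nat) := {dffun forall n : 'I_N, option 'I_(D n)}.

Definition has_shape N (D : 'I_N -> nat) (i : midx D) (nu : {set 'I_N}) : bool :=
  [forall n, (i n != None) == (n \in nu)].

Definition fnorm (R : rcfType) N (D : 'I_N -> nat) (nu : {set 'I_N})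
  (T : midx D -> R) : R :=
  Num.sqrt (\sum_(i : midx D | has_shape i nu) T i ^+ 2).

(* Frobenius norm of the tensor obtained by stacking (T r)_{r < K}
   (each a tensor over nu) along an additional last mode of size K *)
Definition stack_norm (R : rcfType) N (D : 'I_N -> nat) (nu : {set 'I_N})
  (K : nat) (T : nat -> midx D -> R) : R :=
  Num.sqrt (\sum_(i : midx D | has_shape i nu) \sum_(r < K) T r i ^+ 2).

Definition colnorm (R : rcfType) (rows : nat) (Wm : nat -> nat -> R) (r : nat) : R :=
  Num.sqrt (\sum_(r' < rows) Wm r' r ^+ 2).

(* Weight matrices are given entrywise (0-indexed): W nu r' r is the entry
   (r', r) of W^{(nu)} in R^{R_nu x R_{Pa(nu)}}; Rk nu = R_nu for interior nu
   (for a leaf {n}, R_{n} = D n).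
   itens W t r i = value of the intermediate tensor W^{(label t, r)} at the
   multi-index i (of shape label t). For an interior node, the tensor product
   of the children's tensors (which have disjoint mode sets) followed by the
   mode permutation pi_nu is, in the labelled-mode representation, the
   pointwise product of the children's values (each child reads only the
   coordinates in its own label). *)
Fixpoint itens (R : pzRingType) N (D : 'I_N -> nat) (Rk : {set 'I_N} -> nat)
  (W : {set 'I_N} -> nat -> nat -> R) (t : mtree N) (r : nat) (i : midx D)
  {struct t} : R :=
  match t with
  | MLeaf n => if i n is Some k then W [set n] (nat_of_ord k) r else 0
  | MNode cs =>
      \sum_(r' < Rk (label t))
        W (label t) r' r *
        (fix P (cs : seq (mtree N)) : R :=
           match cs with
           | [::] => 1
           | c :: cs' => @itens R N D Rk W c r' i * P cs'
           end) cs
  end.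

(* An entry of W^(nu,r) is sum_r' W^(nu)_(r',r) prod_c W^(c,r')(i_c), where i_c is
   the part of the multi-index lying in the label of the child c.  Cauchy-Schwarz in
   r' bounds its square by |W^(nu)_(:,r)|^2 sum_r' prod_c W^(c,r')(i_c)^2.  Summing
   over multi-indices, which split into the children's index blocks, and using
   sum_r' prod_c x_(c,r') <= prod_c sum_r' x_(c,r') for nonnegative x, the right side
   becomes |W^(nu)_(:,r)|^2 prod_c |W^(c,:)|^2. *)

From HB Require Import structures.
From mathcomp Require Import all_boot all_order all_algebra.
From mathcomp Require Import ring.
From Stdlib Require List.
Import Order.TTheory GRing.Theory Num.Theory.
Local Open Scope ring_scope.
Set Implicit Arguments. Unset Strict Implicit.

Section SumInequalities.
Variables (R : realDomainType) (I : finType).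

Lemma sumr_sqr_ge0 (J : Type) (s : seq J) (P : pred J) (F : J -> R) :
  0 <= \sum_(j <- s | P j) F j ^+ 2.
Proof. by apply: sumr_ge0 => j _; apply: sqr_ge0. Qed.

Lemma CauchySchwarz_sum (a b : I -> R) :
  (\sum_i a i * b i) ^+ 2 <= (\sum_i a i ^+ 2) * (\sum_i b i ^+ 2).
Proof.
set X := (\sum_i a i ^+ 2) * _; set Y := _ ^+ 2.
have X_E : X = \sum_i \sum_j a i ^+ 2 * b j ^+ 2.
  by rewrite /X mulr_suml; under eq_bigr do rewrite mulr_sumr.
have X_E' : X = \sum_i \sum_j a j ^+ 2 * b i ^+ 2.
  by rewrite exchange_big X_E.
have Y_E : Y = \sum_i \sum_j (a i * b i) * (a j * b j).
  by rewrite /Y expr2 mulr_suml; under eq_bigr do rewrite mulr_sumr.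
have lagrange_identity : \sum_i \sum_j (a i * b j - a j * b i) ^+ 2 = (X - Y) *+ 2.
  have expand i j : (a i * b j - a j * b i) ^+ 2 =
      a i ^+ 2 * b j ^+ 2 + a j ^+ 2 * b i ^+ 2 - (a i * b i) * (a j * b j) *+ 2.
    by ring.
  under eq_bigr do under eq_bigr do rewrite expand.
  under eq_bigr do rewrite sumrB big_split sumrMnl.
  by rewrite sumrB big_split sumrMnl /= -X_E -X_E' -Y_E mulrnBl mulr2n.
have : 0 <= \sum_i \sum_j (a i * b j - a j * b i) ^+ 2.
  by apply: sumr_ge0 => i _; apply: sumr_sqr_ge0.
by rewrite lagrange_identity pmulrn_lge0 // subr_ge0.
Qed.

Lemma sum_mul_le_mul_sum (x y : I -> R) :
  (forall i, 0 <= x i) -> (forall i, 0 <= y i) ->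
  \sum_i x i * y i <= (\sum_i x i) * (\sum_i y i).
Proof.
move=> x_ge0 y_ge0; rewrite mulr_suml; apply: ler_sum => i _.
rewrite ler_wpM2l // (bigD1 i) //= lerDl.
by apply: sumr_ge0 => j _.
Qed.

End SumInequalities.

Lemma prodr_sqrt (R : rcfType) (T : Type) (s : seq T) (F : T -> R) :
  (forall x, 0 <= F x) ->
  \prod_(x <- s) Num.sqrt (F x) = Num.sqrt (\prod_(x <- s) F x).
Proof.
move=> F_ge0; elim: s => [|x s IHs]; first by rewrite !big_nil sqrtr1.
by rewrite !big_cons IHs sqrtrM.
Qed.

Lemma all_In (T : Type) (p : pred T) (s : seq T) (x : T) :
  all p s -> List.In x s -> p x.
Proof. by elim: s => [|y s IHs] //= /andP[py ps] [<- | /IHs]; last exact. Qed.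

Section MtreeInduction.
Variables (N : nat) (P : mtree N -> Prop).
Hypothesis P_leaf : forall n, P (MLeaf n).
Hypothesis P_node : forall cs, (forall c, List.In c cs -> P c) -> P (MNode cs).

Fixpoint mtree_nested_ind (t : mtree N) : P t :=
  match t with
  | MLeaf n => P_leaf n
  | MNode cs => @P_node cs
      ((fix all_P (cs : seq (mtree N)) : forall c, List.In c cs -> P c :=
          match cs with
          | [::] => fun c c_in => False_ind _ c_in
          | c0 :: cs' => fun c c_in =>
              match c_in with
              | or_introl e => eq_ind _ P (mtree_nested_ind c0) _ e
              | or_intror c_in' => all_P cs' c c_in'
              end
          end) cs)
  end.

End MtreeInduction.

Section ModeTrees.
Variable N : nat.

Lemma label_MNode (cs : seq (mtree N)) : label (MNode cs) = \bigcup_(c <- cs) label c.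
Proof. by elim: cs => [|c cs IHcs]; rewrite ?big_nil ?big_cons // -IHcs. Qed.

Lemma nodes_pr_In_subtrees (Rk : {set 'I_N} -> nat) (t : mtree N) pr nu p :
  List.In (nu, p) (nodes_pr Rk t pr) -> List.In nu (subtrees t).
Proof.
elim/mtree_nested_ind: t pr => [n|cs IH] pr /=; first by case=> // [[->]]; left.
case=> [[-> _]|]; first by left.
move=> nu_in; right; move: nu_in; move: (Rk _) => q.
elim: cs IH => [|c cs IHcs] IH //= nu_in; apply: List.in_or_app.
case: (List.in_app_or _ _ _ nu_in) => [nu_c | nu_cs]; [left | right].
  exact: (IH c (or_introl erefl) q nu_c).
by apply: IHcs nu_cs => c' c'_in; apply: IH; right.
Qed.

End ModeTrees.

Section Restriction.
Variables (N : nat) (D : 'I_N -> nat).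
Implicit Types (A B C : {set 'I_N}) (k : midx D).

Definition restrict A k : midx D := [ffun n => if n \in A then k n else None].

Lemma restrict_restrict A B k : restrict A (restrict B k) = restrict (A :&: B) k.
Proof. by apply/ffunP => n; rewrite !ffunE inE; case: (n \in A). Qed.

Lemma has_shapeP k A n : has_shape k A -> (k n != None) = (n \in A).
Proof. by move/forallP/(_ n)/eqP. Qed.

Lemma has_shape_restrict k A C :
  has_shape k C -> A \subset C -> has_shape (restrict A k) A.
Proof.
move=> kC AC; apply/forallP => n; rewrite ffunE.
by case: ifP => nA //; rewrite (has_shapeP n kC) (subsetP AC).
Qed.

Lemma restrict_pair_inj A B :
  {in [set k | has_shape k (A :|: B)] &,
    injective (fun k => (restrict A k, restrict B k))}.
Proof.
move=> k1 k2; rewrite !inE => k1AB k2AB [eA eB]; apply/ffunP => n.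
have := congr1 (fun k => k n) eA; have := congr1 (fun k => k n) eB; rewrite !ffunE.
case: (boolP (n \in A)) => nA; first by move=> _ ->.
case: (boolP (n \in B)) => nB; first by move=> ->.
move=> _ _; have := has_shapeP n k1AB; have := has_shapeP n k2AB.
by rewrite !inE (negbTE nA) (negbTE nB) => /negbFE/eqP -> /negbFE/eqP ->.
Qed.

Definition depends_only_on (T : Type) A (f : midx D -> T) :=
  forall k, f (restrict A k) = f k.

Lemma depends_only_onS (T : Type) A B (f : midx D -> T) :
  A \subset B -> depends_only_on A f -> depends_only_on B f.
Proof.
by move=> AB fA k; rewrite -fA restrict_restrict (setIidPl AB); exact: fA.
Qed.

Lemma depends_only_on_prod (R : pzSemiRingType) (I : Type) (s : seq I)
    (F : I -> {set 'I_N}) (f : I -> midx D -> R) :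
  (forall x, List.In x s -> depends_only_on (F x) (f x)) ->
  depends_only_on (\bigcup_(x <- s) F x) (fun k => \prod_(x <- s) f x k).
Proof.
elim: s => [|x s IHs] fs k; first by rewrite !big_nil.
have fx := depends_only_onS (subsetUl _ _) (fs x (or_introl erefl)).
have fs' := depends_only_onS (subsetUr _ _) (IHs (fun y y_in => fs y (or_intror y_in))).
by rewrite !big_cons fx fs'.
Qed.

End Restriction.

Section IntermediateTensors.
Variables (R : pzRingType) (N : nat) (D : 'I_N -> nat).
Variables (Rk : {set 'I_N} -> nat) (W : {set 'I_N} -> nat -> nat -> R).
Local Notation itens := (@itens R N D Rk W).

Lemma itens_MNode cs r k :
  itens (MNode cs) r k =
  \sum_(r' < Rk (label (MNode cs))) W (label (MNode cs)) r' r * \prod_(c <- cs) itens c r' k.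
Proof.
apply: eq_bigr => r' _; congr (_ * _); move: (nat_of_ord r') => q.
by elim: cs {r'} => [|c cs /= ->]; rewrite ?big_nil ?big_cons.
Qed.

Lemma itens_depends_only_on t r : depends_only_on (label t) (itens t r).
Proof.
elim/mtree_nested_ind: t r => [n|cs IH] r k.
  by rewrite /= ffunE inE eqxx.
rewrite !itens_MNode; apply: eq_bigr => r' _; congr (_ * _).
have := depends_only_on_prod (fun c c_in => IH c c_in r').
by rewrite -label_MNode; apply.
Qed.

End IntermediateTensors.

Section StackedNorms.
Variables (R : realDomainType) (N : nat) (D : 'I_N -> nat).
Implicit Types (A B : {set 'I_N}) (K : nat) (T : nat -> midx D -> R).

Definition stack_sqnorm A K T : R :=
  \sum_(k : midx D | has_shape k A) \sum_(r < K) T r k ^+ 2.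

Lemma stack_sqnorm_ge0 A K T : 0 <= stack_sqnorm A K T.
Proof. by apply: sumr_ge0 => k _; apply: sumr_sqr_ge0. Qed.

Lemma eq_stack_sqnorm A K T T' :
  (forall r k, T r k = T' r k) -> stack_sqnorm A K T = stack_sqnorm A K T'.
Proof.
by move=> eT; apply: eq_bigr => k _; apply: eq_bigr => r _; rewrite eT.
Qed.

Lemma stack_sqnormM_le A B K (f g : nat -> midx D -> R) :
  (forall r, depends_only_on A (f r)) -> (forall r, depends_only_on B (g r)) ->
  stack_sqnorm (A :|: B) K (fun r k => f r k * g r k) <=
  stack_sqnorm A K f * stack_sqnorm B K g.
Proof.
move=> f_A g_B.
pose G (p : midx D * midx D) := \sum_(r < K) f r p.1 ^+ 2 * g r p.2 ^+ 2.
have G_ge0 p : 0 <= G p by apply: sumr_ge0 => r _; rewrite mulr_ge0 ?sqr_ge0.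
(* A multi-index of shape [A :|: B] is determined by its restrictions to [A]
   and [B], so the left side is a sub-sum of a sum over pairs of indices. *)
pose split_AB (k : midx D) := (restrict A k, restrict B k).
have lhsE : stack_sqnorm (A :|: B) K (fun r k => f r k * g r k) =
    \sum_(p in split_AB @: [set k | has_shape k (A :|: B)]) G p.
  rewrite big_imset; last exact: restrict_pair_inj.
  apply: eq_big => [k | k _]; first by rewrite inE.
  by apply: eq_bigr => r _; rewrite f_A g_B exprMn.
have image_sub p : p \in split_AB @: [set k | has_shape k (A :|: B)] ->
    has_shape p.1 A && has_shape p.2 B.
  case/imsetP => k; rewrite inE => kAB ->.
  by rewrite /= !(has_shape_restrict kAB) ?subsetUl ?subsetUr.
apply: (@le_trans _ _ (\sum_(i | has_shape i A) \sum_(j | has_shape j B) G (i, j))).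
  rewrite lhsE [leRHS]pair_big_dep big_mkcond [leRHS]big_mkcond /=.
  apply: ler_sum => p _; case: ifP => [/image_sub -> | _]; first by case: p.
  by case: ifP => // _; apply: G_ge0.
rewrite /stack_sqnorm mulr_suml; apply: ler_sum => i _.
rewrite mulr_sumr; apply: ler_sum => j _.
by apply: sum_mul_le_mul_sum => r; apply: sqr_ge0.
Qed.

End StackedNorms.

Section ItensNorms.
Variables (R : realDomainType) (N : nat) (D : 'I_N -> nat).
Variables (Rk : {set 'I_N} -> nat) (W : {set 'I_N} -> nat -> nat -> R).
Local Notation itens := (@itens R N D Rk W).

Lemma stack_sqnorm_itens_prod_le K c cs :
  stack_sqnorm (\bigcup_(x <- c :: cs) label x) K
    (fun r k => \prod_(x <- c :: cs) itens x r k) <=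
  \prod_(x <- c :: cs) stack_sqnorm (label x) K (itens x).
Proof.
elim: cs c => [|c' cs IHcs] c.
  by under eq_stack_sqnorm do rewrite big_seq1; rewrite !big_seq1.
under eq_stack_sqnorm do rewrite big_cons.
rewrite big_cons [leRHS]big_cons.
apply: le_trans (ler_wpM2l (stack_sqnorm_ge0 _ _ _) (IHcs c')).
apply: stack_sqnormM_le => r; first exact: itens_depends_only_on.
by apply: depends_only_on_prod => x _; apply: itens_depends_only_on.
Qed.

Lemma sqnorm_itens_MNode_le c cs r :
  \sum_(k | has_shape k (label (MNode (c :: cs)))) itens (MNode (c :: cs)) r k ^+ 2 <=
  (\sum_(r' < Rk (label (MNode (c :: cs)))) W (label (MNode (c :: cs))) r' r ^+ 2) *
  \prod_(x <- c :: cs) stack_sqnorm (label x) (Rk (label (MNode (c :: cs)))) (itens x).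
Proof.
set K := Rk _; set P := (fun r' k => \prod_(x <- c :: cs) itens x r' k).
apply: (@le_trans _ _ ((\sum_(r' < K) W _ r' r ^+ 2) * stack_sqnorm _ K P)).
  rewrite mulr_sumr; apply: ler_sum => k _; rewrite itens_MNode.
  exact: CauchySchwarz_sum.
rewrite ler_wpM2l ?sumr_sqr_ge0 //.
by rewrite label_MNode; apply: stack_sqnorm_itens_prod_le.
Qed.

End ItensNorms.

Lemma stack_normE (R : rcfType) N (D : 'I_N -> nat) A K (T : nat -> midx D -> R) :
  stack_norm A K T = Num.sqrt (stack_sqnorm A K T).
Proof. by []. Qed.

Theorem lemma7 (R : rcfType) (N : nat) (D : 'I_N -> nat)
  (Rk : {set 'I_N} -> nat) (W : {set 'I_N} -> nat -> nat -> R) (t : mtree N) :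
  mode_tree t ->
  (forall n, (0 < D n)%N) ->
  (forall s, List.In s (subtrees t) -> is_interior s -> (0 < Rk (label s))%N) ->
  forall (nu : mtree N) (pr : nat),
    List.In (nu, pr) (nodes_pr Rk t 1) -> is_interior nu ->
    forall r : nat, (r < pr)%N ->
      @fnorm R N D (label nu) (@itens R N D Rk W nu r)
      <= @colnorm R (Rk (label nu)) (W (label nu)) r *
         \prod_(c <- children nu)
            @stack_norm R N D (label c) (Rk (label nu)) (@itens R N D Rk W c).
Proof.
move=> /and3P[_ nonempty_nodes _] _ _ nu pr nu_in nu_interior r _.
have nu_sub := nodes_pr_In_subtrees nu_in.
case: nu nu_in nu_interior nu_sub => // cs _ _ cs_sub.
(* [mode_tree] is needed only here: at a childless node the bound fails. *)
case: cs cs_sub (all_In nonempty_nodes cs_sub) => // c cs _ _.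
rewrite /fnorm /colnorm; under eq_bigr do rewrite stack_normE.
rewrite prodr_sqrt; last by move=> x; apply: stack_sqnorm_ge0.
rewrite -sqrtrM ?sumr_sqr_ge0 // ler_sqrt; first exact: sqnorm_itens_MNode_le.
by rewrite mulr_ge0 ?sumr_sqr_ge0 // prodr_ge0 // => x _; apply: stack_sqnorm_ge0.
Qed.
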